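(* Let $T$ be a power-bounded continuous linear operator on a Fréchet space $X$ with a translation-invariant metric $d$ inducing its topology. (1) If $T$ is recurrent, then $T$ is invertible, $T^{-1}$ is power-bounded and recurrent, and $T$ is an isometry for the metric $d_T^*(x,y)=\sup_{\ell\ge0}d(T^\ell x,T^\ell y)$. (2) If $T$ is hyper-recurrent, then $\mathrm{Hr}(T)=\mathrm{Hr}(T^{-1})$ and $T^{-1}$ is hyper-recurrent.
   Context: $T$ is power-bounded if every orbit $\{T^nx:n\in\mathbb{N}\}$ is bounded in the topological vector space sense (for every neighbourhood $U$ of $0$ there is $r>0$ with the orbit contained in $zU$ whenever $|z|\ge r$). $x$ is recurrent if $T^{\omega_n}x\to x$ for some strictly increasing sequence $(\omega_n)$ of positive integers; $\mathrm{Rec}(T)$ is the set of recurrent vectors and $T$ is recurrent if $\mathrm{Rec}(T)$ is dense. $\mathfrak{C}$ is the set of strictly increasing sequences $\omega$ with $T^{\omega_n}x\to x$ for some $x\ne0$; $\mathfrak{L}(\omega)=\{x:T^{\omega_n}x\to x\}$. $\mathrm{Hr}(T)$ is the set of $x\in\mathrm{Rec}(T)$ such that $\mathfrak{L}(\omega)$ is dense for every $\omega\in\mathfrak{C}$ with $x\in\mathfrak{L}(\omega)$; a recurrent $T$ is hyper-recurrent if $\mathrm{Hr}(T)\ne\emptyset$. The same notions are used for $T^{-1}$. *)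

From HB Require Import structures.
From mathcomp Require Import all_boot all_order all_algebra.
From mathcomp Require Import all_classical all_reals all_analysis.
Set Implicit Arguments. Unset Strict Implicit. Unset Printing Implicit Defensive.
Import Order.TTheory GRing.Theory Num.Theory.
Local Open Scope classical_set_scope.
Local Open Scope ring_scope.

Section defs.
Context (K : numFieldType) (X : tvsType K).

Definition orbit_bounded (f : X -> X) (x : X) : Prop :=
  forall U : set X, nbhs (0 : X) U ->
    exists2 r : K, 0 < r & forall z : K, r <= `|z| ->
      forall n : nat, exists2 u, U u & iter n f x = z *: u.

Definition power_bounded (f : X -> X) : Prop := forall x, orbit_bounded f x.

Definition incr_pos (w : nat -> nat) : Prop :=
  (0 < w 0)%N /\ forall n, (w n < w n.+1)%N.

Definition frakL (f : X -> X) (w : nat -> nat) : set X :=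
  [set x | (fun n => iter (w n) f x) @ \oo --> x].

Definition Rec (f : X -> X) : set X :=
  [set x | exists w, incr_pos w /\ frakL f w x].

Definition recurrent (f : X -> X) : Prop := dense (Rec f).

Definition frakC (f : X -> X) : set (nat -> nat) :=
  [set w | incr_pos w /\ exists x, x <> 0 /\ frakL f w x].

Definition Hr (f : X -> X) : set X :=
  [set x | Rec f x /\
     forall w, frakC f w -> frakL f w x -> dense (frakL f w)].

Definition hyper_recurrent (f : X -> X) : Prop :=
  recurrent f /\ Hr f !=set0.
End defs.

Section metric.
Context (R : realType) (X : Type).

Definition dstar (d : X -> X -> R) (f : X -> X) (x y : X) : \bar R :=
  ereal_sup (range (fun l : nat => (d (iter l f x) (iter l f y))%:E)).
End metric.

(* the scalar field is complete (together with archimedean: K is R or C) *)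
Definition complete_field (K : numFieldType) : Prop :=
  forall u : nat -> K^o, cauchy (u @ \oo) -> cvg (u @ \oo).

(* Power-boundedness and the Banach--Steinhaus theorem make the iterates
   [T^n] equicontinuous.  If [T] is also recurrent, then every [z] is close to
   a recurrent [y] whose orbit returns near [y], and equicontinuity transfers
   this to [z]: for all [e > 0] and [m] there is [l >= m] with
   [d(z,0) <= d(T^l z,0) + e].  Hence [T] is bounded below, thus injective with
   closed range; the range contains the dense set of recurrent vectors, so [T]
   is onto.  The same inequality makes [d_T^*] invariant under [T] and makes
   the iterates of [T^-1] equicontinuous, whence [T^-1] is continuous and
   power-bounded, and [T^(w n) x -> x] iff [T^-(w n) x -> x]: the sets
   [frakL w], hence [Rec] and [Hr], are the same for [T] and [T^-1]. *)

From HB Require Import structures.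
From mathcomp Require Import all_boot all_order all_algebra.
From mathcomp Require Import all_classical all_reals all_analysis.
From mathcomp Require Import lra.
Import Order.TTheory GRing.Theory Num.Theory.
Local Open Scope classical_set_scope.
Local Open Scope ring_scope.

Lemma iter_morph1 {T : Type} {f op : T -> T} :
  {morph f : a / op a} -> forall n, {morph iter n f : a / op a}.
Proof. by move=> fop; elim=> [//|n IH] a /=; rewrite IH fop. Qed.

Lemma iter_morph2 {T : Type} {f : T -> T} {op : T -> T -> T} :
  {morph f : a b / op a b} -> forall n, {morph iter n f : a b / op a b}.
Proof. by move=> fop; elim=> [//|n IH] a b /=; rewrite IH fop. Qed.

Lemma iter_can {T : Type} {f g : T -> T} :
  cancel f g -> forall n, cancel (iter n f) (iter n g).
Proof. by move=> fK; elim=> [//|n IH] x; rewrite iterSr iterS fK IH. Qed.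

Lemma incr_pos_ge {w} : incr_pos w -> forall n, (n <= w n)%N.
Proof. by case=> _ w_incr; elim=> [//|n IH]; apply: leq_ltn_trans IH (w_incr n). Qed.

Lemma continuous_iter {T : topologicalType} {f : T -> T} :
  continuous f -> forall n, continuous (iter n f).
Proof.
move=> fc; elim=> [|n IH] x; first exact: cvg_id.
exact: (continuous_comp (IH x) (fc _)).
Qed.

Lemma continuous_scaler {K : numFieldType} {X : tvsType K} (c : K) :
  continuous (fun x : X => c *: x).
Proof.
move=> x.
apply: (@continuous_comp _ _ _ (fun y : X => (c : K^o, y)) (fun z : K^o * X => z.1 *: z.2)).
  exact: (cvg_pair (cvg_cst _) cvg_id).
exact: scale_continuous.
Qed.

Section TranslationInvariantMetric.
Context (R : realType) (K : archiNumFieldType) (X : tvsType K) (d : X -> X -> R)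
  (d_ge0 : forall x y, 0 <= d x y)
  (d_eq0 : forall x y, d x y = 0 <-> x = y)
  (d_sym : forall x y, d x y = d y x)
  (d_tri : forall x y z, d x z <= d x y + d y z)
  (d_inv : forall x y z, d (x + z) (y + z) = d x y)
  (d_top : forall (x : X) (U : set X),
     nbhs x U <-> exists2 e : R, 0 < e & [set y | d x y < e] `<=` U)
  (d_complete : forall u : nat -> X,
     (forall e : R, 0 < e -> exists N : nat, forall m n : nat,
        (N <= m)%N -> (N <= n)%N -> d (u m) (u n) < e) ->
     exists l : X, u @ \oo --> l).

Lemma distxx x : d x x = 0.
Proof. exact/d_eq0. Qed.

Lemma dist_sub0 x y : d x y = d (x - y) 0.
Proof. by rewrite -(d_inv (x - y) 0 y) subrK add0r. Qed.

Lemma dist_small_eq x y : (forall e, 0 < e -> d x y < e) -> x = y.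
Proof.
move=> small; apply/d_eq0/le_anti; rewrite d_ge0 andbT.
by apply/ler_addgt0Pr => e e0; rewrite add0r ltW // small.
Qed.

Lemma dist0D u v : d (u + v) 0 <= d u 0 + d v 0.
Proof.
apply: le_trans (d_tri _ v _) _; have := d_inv u 0 v; rewrite add0r => ->.
by rewrite lerD2l.
Qed.

Lemma dist0_natmul u n : d (u *+ n) 0 <= n%:R * d u 0.
Proof.
elim: n => [|n IH]; first by rewrite mulr0n distxx mul0r.
rewrite mulrS -nat1r mulrDl mul1r.
by apply: le_trans (dist0D _ _) _; rewrite lerD2l.
Qed.

Lemma nbhs_dball x {e : R} : 0 < e -> nbhs x [set y | d x y < e].
Proof. by move=> e0; apply/d_top; exists e. Qed.

Lemma cvg_distP (u : nat -> X) l : u @ \oo --> l <->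
  forall e, 0 < e -> exists N, forall n, (N <= n)%N -> d l (u n) < e.
Proof.
split=> [ul e e0 | ul U /d_top [e e0 eU]].
  by have [N _ HN] := ul _ (nbhs_dball l e0); exists N.
by have [N HN] := ul e e0; exists N => // n /HN /eU.
Qed.

Lemma continuous_distP (f : X -> X) x : {for x, continuous f} <->
  forall e, 0 < e -> exists2 r, 0 < r & forall y, d x y < r -> d (f x) (f y) < e.
Proof.
split=> [fc e e0 | fc U /d_top [e e0 eU]].
  by have /fc /d_top [r r0 rf] := nbhs_dball (f x) e0; exists r => // y /rf.
by have [r r0 rf] := fc e e0; apply/d_top; exists r => // y /rf /eU.
Qed.

Lemma open_dball x e : open [set y | d x y < e].
Proof.
rewrite openE => y /= xy; apply/d_top; exists (e - d x y); first by rewrite subr_gt0.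
by move=> z /= yz; apply: le_lt_trans (d_tri x y z) _; rewrite -ltrBrDl.
Qed.

Lemma closed_dball0 r : closed [set y | d y 0 <= r].
Proof.
rewrite -[X in closed X]setCK; apply: open_closedC; rewrite openE => y /=.
move=> /negP; rewrite -ltNge => ry; apply/d_top; exists (d y 0 - r).
  by rewrite subr_gt0.
move=> z /= yz; apply/negP; rewrite -ltNge; have := d_tri y z 0; move: yz; lra.
Qed.

Lemma dense_distP {A : set X} : dense A ->
  forall x e, 0 < e -> exists a, A a /\ d x a < e.
Proof.
move=> dA x e e0; have [|a [xa Aa]] := dA _ _ (open_dball x e).
  by exists x; rewrite /= distxx.
by exists a.
Qed.

Lemma closed_dball_compl {A : set X} {y} : closed A -> ~ A y ->
  exists2 t, 0 < t & forall z, d y z < t -> ~ A z.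
Proof.
move=> /closed_openC; rewrite openE => /[apply] /d_top [t t0 tA].
by exists t => // z /tA.
Qed.

Lemma nested_dballs (c : nat -> X) (rho : nat -> R) :
  (forall n, 0 <= rho n) ->
  (forall n, d (c n) (c n.+1) + rho n.+1 <= rho n) ->
  (forall e, 0 < e -> exists n, rho n < e) ->
  exists l, forall n, d (c n) l <= rho n.
Proof.
move=> rho_ge0 nested small.
have nestedD n j : d (c n) (c (n + j)%N) + rho (n + j)%N <= rho n.
  elim: j => [|j IH]; first by rewrite addn0 distxx add0r.
  rewrite addnS; have := nested (n + j)%N; have := d_tri (c n) (c (n + j)%N) (c (n + j).+1).
  move: IH; lra.
have dist_le n m : (n <= m)%N -> d (c n) (c m) <= rho n.
  by move=> /subnKC <-; have := nestedD n (m - n)%N; have := rho_ge0 (n + (m - n))%N; lra.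
have [l /cvg_distP cl] : exists l : X, c @ \oo --> l.
  apply: d_complete => e e0; have [N rhoN] := small _ (divr_gt0 e0 (ltr0Sn R 1)).
  exists N => m n Nm Nn; apply: le_lt_trans (d_tri (c m) (c N) (c n)) _; rewrite d_sym.
  have := dist_le _ _ Nm; have := dist_le _ _ Nn; move: rhoN; lra.
exists l => n; apply/ler_addgt0Pr => e e0; have [M cM] := cl e e0.
apply: le_trans (d_tri _ (c (maxn n M)) _) _; apply: lerD.
  by apply: dist_le; rewrite leq_maxl.
by rewrite d_sym ltW // cM // leq_maxr.
Qed.

(* Nested balls [B(c n, rho n)] whose enlargements [B(c k.+1, 2 rho k.+1)] miss
   [F k]; their common point then lies in no [F k]. *)
Lemma baire {F : nat -> set X} :
  (forall k, closed (F k)) -> (forall x, exists k, F k x) ->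
  exists k x r, 0 < r /\ [set y | d x y < r] `<=` F k.
Proof.
move=> Fc Fcov; apply: contrapT => no_ball.
have step (kxr : nat * (X * {posnum R})) : exists yq : X * {posnum R},
    [/\ yq.2%:num <= kxr.1.+1%:R^-1, d kxr.2.1 yq.1 + yq.2%:num <= kxr.2.2%:num
      & forall z, d yq.1 z < 2 * yq.2%:num -> ~ F kxr.1 z].
  case: kxr => k [x r] /=.
  have [y [xy nFy]] : exists y, d x y < r%:num / 2 /\ ~ F k y.
    apply: contrapT => ball_in; apply: no_ball; exists k, x, (r%:num / 2).
    split=> // y xy; apply: contrapT => nFy; exact: ball_in (ex_intro _ y (conj xy nFy)).
  have [t t0 tF] := closed_dball_compl (Fc k) nFy.
  pose q := Num.min (t / 2) (Num.min (r%:num / 2 - d x y) k.+1%:R^-1).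
  have q0 : 0 < q by rewrite !lt_min divr_gt0 //= subr_gt0 xy invr_gt0 ltr0Sn.
  exists (y, PosNum q0); split => /=; first by rewrite !ge_min lexx !orbT.
    have : q <= r%:num / 2 - d x y by rewrite !ge_min lexx orbT.
    by have : 0 < r%:num by []; lra.
  move=> z yz; apply: tF; apply: lt_le_trans yz _.
  have : q <= t / 2 by rewrite ge_min lexx.
  lra.
have [g gP] := choice step.
pose c := fix c (n : nat) : X * {posnum R} :=
  if n is m.+1 then g (m, c m) else (0, PosNum (@ltr01 R)).
have [l cl] : exists l, forall n, d (c n).1 l <= (c n).2%:num.
  apply: (nested_dballs (fun n => (c n).1) (fun n => (c n).2%:num)) => [n|n|e e0].
  - exact/ltW.
  - by have [_ ? _] := gP (n, c n).
  - have [N _ /(_ N (leqnn N)) NE] := near_infty_natSinv_lt (PosNum e0).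
    by exists N.+1; have [? _ _] := gP (N, c N); apply: le_lt_trans NE.
have [k Fkl] := Fcov l; have [_ _ avoid] := gP (k, c k); apply: (avoid l) Fkl.
apply: le_lt_trans (cl k.+1) _; have : 0 < (c k.+1).2%:num by []; rewrite /=; lra.
Qed.

Definition equicontinuous_iterates (f : X -> X) := forall e, 0 < e ->
  exists2 r, 0 < r & forall u, d u 0 < r -> forall n, d (iter n f u) 0 <= e.

Lemma orbit_bounded_shrink {f : X -> X} {x e} :
  (forall c : K, {morph f : a / c *: a}) -> orbit_bounded f x -> 0 < e ->
  exists k : nat, forall n, d (iter n f (k.+1%:R^-1 *: x)) 0 < e.
Proof.
move=> fZ x_bdd e0; have [r r0 rx] := x_bdd _ (nbhs_dball 0 e0).
exists (Num.Def.archi_bound r) => n.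
have : r <= `|(Num.Def.archi_bound r).+1%:R : K|.
  rewrite normr_nat; apply/ltW/(lt_le_trans (archi_boundP (ltW r0))).
  by rewrite ler_nat.
rewrite (iter_morph1 (fZ _)) => /rx /(_ n) [u /= u0 ->].
by rewrite scalerA mulVf ?pnatr_eq0 // scale1r d_sym.
Qed.

(* Banach--Steinhaus: the sets [F k] below are closed and cover X by power
   boundedness, so by Baire one of them contains a ball. *)
Lemma power_bounded_equicontinuous {T : {linear X -> X}} :
  continuous T -> power_bounded T -> equicontinuous_iterates T.
Proof.
move=> T_cont T_pb e e0; have e2 : 0 < e / 2 by rewrite divr_gt0.
pose F k := \bigcap_n (iter n T \o *:%R (k.+1%:R^-1 : K)) @^-1` [set y | d y 0 <= e / 2].
have Fc k : closed (F k).
  apply: closed_bigI => n _; apply: preimage_closed (closed_dball0 _) => x _.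
  exact: continuous_comp (continuous_scaler _ _) (continuous_iter T_cont n _).
have Fcov x : exists k, F k x.
  have [k kx] := orbit_bounded_shrink (linearZZ T) (T_pb x) e2.
  by exists k => n _; apply/ltW/kx.
have [k [x0 [r [r0 ballF]]]] := baire Fc Fcov.
have k0 : 0 < k.+1%:R :> R by [].
exists (r / k.+1%:R); first by rewrite divr_gt0.
move=> u u0 n.
have F0 : F k x0 by apply: ballF; rewrite /= distxx.
have F1 : F k (k.+1%:R *: u + x0).
  apply: ballF; rewrite /= -{1}[x0]add0r d_inv d_sym scaler_nat.
  by apply: le_lt_trans (dist0_natmul _ _) _; rewrite -ltr_pdivlMl // mulrC.
have /= := F1 n I; have /= := F0 n I.
rewrite scalerDr scalerA mulVf ?pnatr_eq0 // scale1r (iter_morph2 (linearD T)).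
set A := iter n T (_ *: x0) => A_le uA_le.
have := d_inv (iter n T u) 0 A; rewrite add0r => <-.
by apply: le_trans (d_tri _ 0 _) _; rewrite (d_sym 0 A); move: A_le uA_le; lra.
Qed.

Lemma frakL_sub (f g : X -> X) w :
  (forall n, cancel (iter n f) (iter n g)) -> {morph g : a b / a - b} ->
  equicontinuous_iterates g -> frakL f w `<=` frakL g w.
Proof.
move=> fgK gB g_ec x /cvg_distP xw; apply/cvg_distP => e e0.
have [r r0 rg] := g_ec _ (divr_gt0 e0 (ltr0Sn R 1)); have [N Nw] := xw r r0.
exists N => n Nn; rewrite dist_sub0 -{1}(fgK (w n) x) -(iter_morph2 gB).
apply: le_lt_trans (rg _ _ _) _; first by rewrite -dist_sub0 d_sym Nw.
by rewrite ltr_pdivrMr // ltr_pMr // ltr1n.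
Qed.

(* Only the term [n = 0] of the [f]-orbits is used: it says that every vector
   is absorbed by every neighbourhood of [0]. *)
Lemma equicontinuous_power_bounded (f g : X -> X) :
  (forall c : K, {morph g : a / c *: a}) -> equicontinuous_iterates g ->
  power_bounded f -> power_bounded g.
Proof.
move=> gZ g_ec f_pb x U /d_top [e e0 eU].
have [r r0 rg] := g_ec _ (divr_gt0 e0 (ltr0Sn R 1)).
have [s s0 sx] := f_pb x _ (nbhs_dball 0 r0).
exists s => // z zs n; have [u /= u0 ->] := sx z zs 0%N.
exists (iter n g u); last by rewrite (iter_morph1 (gZ _)).
apply: eU; rewrite /= d_sym; apply: le_lt_trans (rg u _ n) _; first by rewrite d_sym.
by rewrite ltr_pdivrMr // ltr_pMr // ltr1n.
Qed.

Section Recurrent.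
Context {T : {linear X -> X}} (T_cont : continuous T)
  (T_ec : equicontinuous_iterates T) (T_rec : recurrent T).

Let iterTB n : {morph iter n T : a b / a - b} := iter_morph2 (linearB T) n.

(* Approximate [z] by a recurrent [y]: [T^l y] returns near [y], and by
   equicontinuity [T^l z] stays near [T^l y]. *)
Lemma dist0_le_iter z m {e : R} : 0 < e ->
  exists2 l, (m <= l)%N & d z 0 <= d (iter l T z) 0 + e.
Proof.
move=> e0; have e3 : 0 < e / 3 by rewrite divr_gt0.
have [r r0 rT] := T_ec _ e3.
have [y [[w [w_incr /cvg_distP yw]] zy]] : exists y, Rec T y /\ d z y < Num.min r (e / 3).
  by apply: dense_distP; rewrite // lt_min r0 e3.
have [N Nw] := yw _ e3; pose l := w (maxn N m).
exists l; first exact: leq_trans (leq_maxr N m) (incr_pos_ge w_incr _).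
have yl : d y (iter l T y) < e / 3 by apply: Nw; rewrite leq_maxl.
have zyl : d (iter l T y) (iter l T z) <= e / 3.
  rewrite dist_sub0 -iterTB; apply: rT; rewrite -dist_sub0 d_sym.
  by apply: lt_le_trans zy _; rewrite ge_min lexx.
have zy3 : d z y < e / 3 by apply: lt_le_trans zy _; rewrite ge_min lexx orbT.
have := d_tri z y 0; have := d_tri y (iter l T y) 0.
have := d_tri (iter l T y) (iter l T z) 0; lra.
Qed.

Lemma bounded_below e : 0 < e ->
  exists2 r, 0 < r & forall z, d (T z) 0 < r -> d z 0 < e.
Proof.
move=> e0; have [r r0 rT] := T_ec _ (divr_gt0 e0 (ltr0Sn R 3)).
exists r => // z Tz; have [l l_gt0 zl] := dist0_le_iter z 1 (divr_gt0 e0 (ltr0Sn R 1)).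
by have := rT _ Tz l.-1; rewrite -iterSr prednK //; move: zl; lra.
Qed.

Lemma recurrent_injective : injective T.
Proof.
move=> a b ab; apply: dist_small_eq => e /bounded_below [r r0 rT].
by rewrite dist_sub0; apply: rT; rewrite linearB ab subrr distxx.
Qed.

Lemma cvg_image_range (u : nat -> X) y :
  (fun n => T (u n)) @ \oo --> y -> exists x, T x = y.
Proof.
move=> /cvg_distP Tu_y.
have [x /cvg_distP ux] : exists x : X, u @ \oo --> x.
  apply: d_complete => e /bounded_below [r r0 rT].
  have [N NT] := Tu_y _ (divr_gt0 r0 (ltr0Sn R 1)).
  exists N => m n Nm Nn; rewrite dist_sub0; apply: rT; rewrite linearB -dist_sub0.
  have := NT m Nm; have := NT n Nn; have := d_tri (T (u m)) y (T (u n)).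
  by rewrite (d_sym _ y); lra.
exists x; apply: dist_small_eq => e e0; have e2 := divr_gt0 e0 (ltr0Sn R 1).
have /continuous_distP /(_ _ e2) [r r0 rT] := T_cont x.
have [N1 N1u] := ux r r0; have [N2 N2T] := Tu_y _ e2; pose n := maxn N1 N2.
have := rT _ (N1u n (leq_maxl _ _)); have := N2T n (leq_maxr _ _).
by have := d_tri (T x) (T (u n)) y; rewrite (d_sym y); lra.
Qed.

Lemma Rec_sub_range {y} : Rec T y -> exists x, T x = y.
Proof.
move=> [w [[w0 w_incr] yw]]; apply: (cvg_image_range (fun n => iter (w n).-1 T y)).
suff -> : (fun n => T (iter (w n).-1 T y)) = fun n => iter (w n) T y by [].
apply/funext => n; rewrite -iterS prednK //.
by case: n => // n; apply: leq_ltn_trans (leq0n _) (w_incr n).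
Qed.

Lemma recurrent_surjective y : exists x, T x = y.
Proof.
have inv_gt0 n : 0 < n.+1%:R^-1 :> R by rewrite invr_gt0.
have [v vy] := choice (fun n => dense_distP T_rec y _ (inv_gt0 n)).
have [u uv] := choice (fun n => Rec_sub_range (proj1 (vy n))).
apply: (cvg_image_range u); apply/cvg_distP => e e0.
have [N _ Ne] := near_infty_natSinv_lt (PosNum e0).
by exists N => n /Ne; rewrite uv; apply: lt_trans (proj2 (vy n)).
Qed.

(* The term [l = 0] of the supremum is recovered, up to [e], from a later one. *)
Lemma dstar_isometry x y : dstar d T (T x) (T y) = dstar d T x y.
Proof.
rewrite /dstar; apply/le_anti/andP; split.
  apply: ge_ereal_sup => _ [l _ <-]; apply: ereal_sup_ubound; exists l.+1 => //.
  by rewrite !iterSr.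
apply: ge_ereal_sup => _ [[|l] _ <-]; last first.
  by apply: ereal_sup_ubound; exists l => //; rewrite !iterSr.
apply/lee_addgt0Pr => e e0; have [l l_gt0 xyl] := dist0_le_iter (x - y) 1 e0.
rewrite -dist_sub0 iterTB -dist_sub0 in xyl.
apply: (@le_trans _ _ ((d (iter l T x) (iter l T y))%:E + e%:E)%E).
  by rewrite -EFinD lee_fin.
apply: leeD2r; apply: ereal_sup_ubound; exists l.-1 => //.
by rewrite -!iterSr prednK.
Qed.

Section Inverse.
Context {S : X -> X} (TS : cancel T S) (ST : cancel S T).

Lemma inverse_morphB : {morph S : a b / a - b}.
Proof. by move=> a b; apply: (can_inj TS); rewrite linearB !ST. Qed.

Lemma inverse_morphZ (c : K) : {morph S : a / c *: a}.
Proof. by move=> a; apply: (can_inj TS); rewrite linearZZ !ST. Qed.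

Lemma inverse_equicontinuous : equicontinuous_iterates S.
Proof.
move=> e e0; have e2 := divr_gt0 e0 (ltr0Sn R 1).
have [r r0 rT] := T_ec _ e2; exists r => // u u0 m.
have [l ml Sl] := dist0_le_iter (iter m S u) m e2.
rewrite -(subnK ml) iterD (iter_can ST) in Sl.
by have := rT u u0 (l - m)%N; move: Sl; lra.
Qed.

Lemma frakL_inverse : frakL S = frakL T.
Proof.
apply/funext => w; apply/seteqP; split; apply: frakL_sub.
- exact: iter_can ST.
- exact: linearB.
- exact: T_ec.
- exact: iter_can TS.
- exact: inverse_morphB.
- exact: inverse_equicontinuous.
Qed.

Lemma Rec_inverse : Rec S = Rec T.
Proof. by rewrite /Rec frakL_inverse. Qed.

Lemma Hr_inverse : Hr S = Hr T.
Proof. by rewrite /Hr /frakC Rec_inverse frakL_inverse. Qed.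

Lemma inverse_continuous : continuous S.
Proof.
move=> x; apply/continuous_distP => e e0.
have [r r0 rS] := inverse_equicontinuous _ (divr_gt0 e0 (ltr0Sn R 1)).
exists r => // y xy; rewrite dist_sub0 -inverse_morphB.
apply: le_lt_trans (rS (x - y) _ 1%N) _; first by rewrite -dist_sub0.
by rewrite ltr_pdivrMr // ltr_pMr // ltr1n.
Qed.

End Inverse.
End Recurrent.

Theorem recurrent_invertible (T : {linear X -> X}) :
  continuous T -> power_bounded T -> recurrent T ->
  exists S : X -> X,
    [/\ cancel T S, cancel S T, continuous S, power_bounded S & recurrent S] /\
    (forall x y, dstar d T (T x) (T y) = dstar d T x y).
Proof.
move=> T_cont T_pb T_rec; have T_ec := power_bounded_equicontinuous T_cont T_pb.
have [S ST] := choice (recurrent_surjective T_cont T_ec T_rec).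
have TS : cancel T S by move=> x; apply: (recurrent_injective T_ec T_rec); rewrite ST.
exists S; split; last exact: dstar_isometry T_ec T_rec.
split=> //; first exact: (inverse_continuous T_ec T_rec TS ST).
  exact: equicontinuous_power_bounded (inverse_morphZ TS ST)
    (inverse_equicontinuous T_ec T_rec ST) T_pb.
by rewrite /recurrent (Rec_inverse T_ec T_rec TS ST).
Qed.

Theorem hyper_recurrent_inverse (T : {linear X -> X}) :
  continuous T -> power_bounded T -> hyper_recurrent T ->
  forall S, cancel T S -> cancel S T -> Hr T = Hr S /\ hyper_recurrent S.
Proof.
move=> T_cont T_pb [T_rec HrT] S TS ST.
have T_ec := power_bounded_equicontinuous T_cont T_pb.
have HrE := Hr_inverse T_ec T_rec TS ST.
split; first by rewrite HrE.
by split; [rewrite /recurrent (Rec_inverse T_ec T_rec TS ST) | rewrite HrE].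
Qed.

End TranslationInvariantMetric.

Theorem proposition5p1 (R : realType) (K : archiNumFieldType)
  (K_complete : complete_field K)
  (X : tvsType K) (d : X -> X -> R)
  (d_ge0 : forall x y, 0 <= d x y)
  (d_eq0 : forall x y, d x y = 0 <-> x = y)
  (d_sym : forall x y, d x y = d y x)
  (d_tri : forall x y z, d x z <= d x y + d y z)
  (d_inv : forall x y z, d (x + z) (y + z) = d x y)
  (d_top : forall (x : X) (U : set X),
     nbhs x U <-> exists2 e : R, 0 < e & [set y | d x y < e] `<=` U)
  (d_complete : forall u : nat -> X,
     (forall e : R, 0 < e -> exists N : nat, forall m n : nat,
        (N <= m)%N -> (N <= n)%N -> d (u m) (u n) < e) ->
     exists l : X, u @ \oo --> l)
  (T : {linear X -> X}) (T_cont : continuous T)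
  (T_pb : power_bounded T) :
  (recurrent T ->
     exists S : X -> X,
       [/\ cancel T S, cancel S T, continuous S,
           power_bounded S & recurrent S] /\
       (forall x y, dstar d T (T x) (T y) = dstar d T x y)) /\
  (hyper_recurrent T ->
     forall S : X -> X, cancel T S -> cancel S T ->
       Hr T = Hr S /\ hyper_recurrent S).
Proof.
by split; [apply: recurrent_invertible | apply: hyper_recurrent_inverse].
Qed.
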